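(* Let $\tau$ be an untwisted skew product with group factor $\mathbb Z^d$ and base shift $(\Sigma,\sigma)$ a transitive countable state Markov shift. The following are equivalent: (a) $\tau$ has the ftp; (b) $\langle D(\tau)\rangle=\mathbb Z^d$; (c) for every finite-index subgroup $\Gamma\subset\mathbb Z^d$, $\langle D(\tau_\Gamma)\rangle_+=\langle D(\tau_\Gamma)\rangle=\mathbb Z^d/\Gamma$.
   Context: Countable state Markov shift $(\Sigma,\sigma)$: countable state set $S$, $\{0,1\}$-matrix $C$ with finite row/column sums, $\Sigma=\{s\in S^{\mathbb Z}:C_{s_is_{i+1}}=1\ \forall i\}$, product of discrete topologies, $\sigma$ left shift; transitive means for all nonempty open $U,V$ some $n$ has $\sigma^n(U)\cap V\neq\emptyset$. Untwisted skew product with group $G$: $\tau(s,g)=(\sigma(s),g+h(s))$ on $\Sigma\times G$, $h:\Sigma\to G$ depending only on $(s_0,s_1)$; for a subgroup $\Gamma$, $\tau_\Gamma(s,g+\Gamma)=(\sigma s,g+h(s)+\Gamma)$ (an untwisted skew product with group $G/\Gamma$). ftp: $\tau_\Gamma$ is transitive for every finite-index subgroup $\Gamma\subset\mathbb Z^d$. With $h(s,n)=\sum_{i=0}^{n-1}h(\sigma^is)$, the displacement set is $D(\tau)=\{h(p,n):n>0,\ \sigma^n(p)=p\}$. For $X$ in an abelian group, $\langle X\rangle$ is the subgroup generated by $X$ and $\langle X\rangle_+$ is the additive semigroup generated by $X$ (all finite sums, with at least one term, of elements of $X$). *)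

From HB Require Import structures.
From mathcomp Require Import all_boot all_order all_algebra.
Set Implicit Arguments. Unset Strict Implicit. Unset Printing Implicit Defensive.
Import GRing.Theory Num.Theory.
Local Open Scope ring_scope.

Section MarkovShift.
Variables (S : countType) (C : S -> S -> bool).

Definition Sigma := {x : int -> S | forall i : int, C (x i) (x (i + 1))}.

Definition shift (x : Sigma) : Sigma :=
  exist (fun y : int -> S => forall i : int, C (y i) (y (i + 1)))
    (fun i => sval x (i + 1)) (fun i => svalP x (i + 1)).

(* finite row / column sums of the 0-1 matrix C *)
Definition finite_rows := forall s : S, exists l : seq S, forall t, C s t -> t \in l.
Definition finite_cols := forall t : S, exists l : seq S, forall s, C s t -> s \in l.

Definition agree (N : nat) (x y : Sigma) :=
  forall i : int, (`|i| <= N)%N -> sval y i = sval x i.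

(* open sets of the product of discrete topologies *)
Definition open_Sigma (U : Sigma -> Prop) :=
  forall x, U x -> exists N : nat, forall y, agree N x y -> U y.

Definition transitive_shift :=
  forall U V : Sigma -> Prop, open_Sigma U -> open_Sigma V ->
    (exists x, U x) -> (exists x, V x) ->
    exists n : nat, exists x, U x /\ V (iter n shift x).

Variables (G : zmodType) (h : S -> S -> G).

Definition cocycle (x : Sigma) : G := h (sval x 0) (sval x 1).

Definition birkhoff (x : Sigma) (n : nat) : G :=
  \sum_(i < n) cocycle (iter i shift x).

Definition skew (z : Sigma * G) : Sigma * G := (shift z.1, z.2 + cocycle z.1).

Definition is_subgroup (Gam : G -> Prop) :=
  Gam 0 /\ forall x y, Gam x -> Gam y -> Gam (x - y).
Definition finite_index (Gam : G -> Prop) :=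
  exists r : seq G, forall g, exists2 a, a \in r & Gam (g - a).

(* A subset of Sigma x (G/Gam) is represented by its preimage in Sigma x G,
   i.e. a Gam-saturated subset U of Sigma x G. It is open (G/Gam discrete)
   iff each slice is open in Sigma. *)
Definition open_quot (Gam : G -> Prop) (U : Sigma -> G -> Prop) :=
  (forall x g c, Gam c -> U x g -> U x (g + c)) /\
  (forall x g, U x g -> exists N : nat, forall y, agree N x y -> U y g).

(* transitivity of tau_Gam on Sigma x G/Gam; tau_Gam is induced by tau. *)
Definition transitive_quot (Gam : G -> Prop) :=
  forall U V : Sigma -> G -> Prop, open_quot Gam U -> open_quot Gam V ->
    (exists x g, U x g) -> (exists x g, V x g) ->
    exists n : nat, exists x g,
      U x g /\ V (iter n skew (x, g)).1 (iter n skew (x, g)).2.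

Definition ftp := forall Gam : G -> Prop,
  is_subgroup Gam -> finite_index Gam -> transitive_quot Gam.

Definition disp (g : G) :=
  exists (p : Sigma) (n : nat), (0 < n)%N /\ iter n shift p = p /\ g = birkhoff p n.

(* preimage in G of D(tau_Gam) subset G/Gam *)
Definition disp_quot (Gam : G -> Prop) (g : G) :=
  exists (p : Sigma) (n : nat), (0 < n)%N /\ iter n shift p = p /\ Gam (g - birkhoff p n).

End MarkovShift.

Section Generated.
Variable (G : zmodType).

Inductive in_gen (X : G -> Prop) : G -> Prop :=
| gen0 : in_gen X 0
| genX x : X x -> in_gen X x
| genB a b : in_gen X a -> in_gen X b -> in_gen X (a - b).

Inductive in_sg (X : G -> Prop) : G -> Prop :=
| sgX x : X x -> in_sg X x
| sgD a b : in_sg X a -> in_sg X b -> in_sg X (a + b).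

(* membership of the coset g + Gam in the subgroup / semigroup of G/Gam
   generated by the image of X *)
Definition gen_quot (Gam : G -> Prop) (X : G -> Prop) (g : G) :=
  exists a, in_gen X a /\ Gam (g - a).
Definition sg_quot (Gam : G -> Prop) (X : G -> Prop) (g : G) :=
  exists a, in_sg X a /\ Gam (g - a).
End Generated.

(* Modulo a finite-index subgroup Gam every element is torsion, so
   the Gam-saturation of a nonempty additively closed set is a subgroup; in
   particular <X> and <X>_+ agree modulo Gam, which gives (b) -> (c).  Points of Sigma are admissible sequences, and finite segments of
   them ("walks") can be glued along common states.  Transitivity provides
   walks between any two occurring states, and closed walks are periodic
   orbits, whose weights are displacements.  Modulo Gam, the weights of loops
   at a fixed state form a subgroup containing D(tau), hence <D(tau)>.
   (b) -> (a): splice the segment leaving an open set U, a correcting loop and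
   the segment entering an open set V.  (a) -> (b) and (c) -> (b): both give
   that <D(tau)> meets every coset of every m Z^d, and a subgroup of Z^d with
   this property is Z^d (clear the coordinates one at a time). *)
From Pilot Require Import Defs.
From HB Require Import structures.
From mathcomp Require Import all_boot all_order all_algebra.
From Stdlib Require Import ClassicalEpsilon ProofIrrelevance FunctionalExtensionality.
Import GRing.Theory Num.Theory Order.TTheory.
Local Open Scope ring_scope.
Set Implicit Arguments. Unset Strict Implicit. Unset Printing Implicit Defensive.

Section Subgroup.
Variables (G : zmodType) (P : G -> Prop).
Hypothesis subP : is_subgroup P.

Lemma subg0 : P 0. Proof. by case: subP. Qed.

Lemma subgB x y : P x -> P y -> P (x - y).
Proof. by case: subP => _; apply. Qed.

Lemma subgN x : P x -> P (- x).
Proof. by move=> Px; rewrite -sub0r; apply: subgB => //; apply: subg0. Qed.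

Lemma subgD x y : P x -> P y -> P (x + y).
Proof. by move=> Px Py; rewrite -[y]opprK; apply: subgB => //; apply: subgN. Qed.

Lemma subgMn x n : P x -> P (x *+ n).
Proof.
move=> Px; elim: n => [|n IHn]; first by rewrite mulr0n; apply: subg0.
by rewrite mulrS; apply: subgD.
Qed.

Lemma subgMz x (z : int) : P x -> P (x *~ z).
Proof.
by move=> Px; case: z => n; [apply: subgMn | rewrite NegzE mulrNz; apply/subgN/subgMn].
Qed.

End Subgroup.

Lemma in_gen_subgroup (G : zmodType) (X : G -> Prop) : is_subgroup (in_gen X).
Proof. by split; [apply: gen0 | move=> x y; apply: genB]. Qed.

Lemma in_gen_min (G : zmodType) (X P : G -> Prop) :
  is_subgroup P -> (forall x, X x -> P x) -> forall g, in_gen X g -> P g.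
Proof.
move=> subP XP g; elim=> [|x /XP //|a b _ Pa _ Pb]; first exact: subg0.
exact: subgB.
Qed.

Lemma in_sg_gen (G : zmodType) (X : G -> Prop) s : in_sg X s -> in_gen X s.
Proof.
elim=> [x Xx|a b _ Ga _ Gb]; first exact: genX.
exact: (subgD (in_gen_subgroup X)).
Qed.

(* The Gam-saturation of L: elements congruent modulo Gam to an element of L.
   [gen_quot Gam X] and [sg_quot Gam X] are the saturations of <X> and <X>_+. *)
Section Saturation.
Variables (G : zmodType) (Gam : G -> Prop).
Hypothesis subGam : is_subgroup Gam.

Definition saturation (L : G -> Prop) (g : G) := exists a, L a /\ Gam (g - a).

Lemma saturation_incl (L : G -> Prop) g : L g -> saturation L g.
Proof. by exists g; split; rewrite // subrr; apply: subg0. Qed.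

Lemma saturation_mono (L L' : G -> Prop) g :
  (forall a, L a -> L' a) -> saturation L g -> saturation L' g.
Proof. by move=> LL' [a [/LL' L'a Ga]]; exists a. Qed.

Lemma saturation_idem (L : G -> Prop) g : saturation (saturation L) g -> saturation L g.
Proof.
move=> [a [[b [Lb Gab]] Ga]]; exists b; split => //.
by have := subgD subGam Ga Gab; rewrite subrKA.
Qed.

Hypothesis finGam : finite_index Gam.

(* Pigeonhole: G/Gam is finite, so every element is torsion modulo Gam. *)
Lemma finite_index_torsion c : exists2 k, (0 < k)%N & Gam (c *+ k).
Proof.
case: finGam => r coset_rep.
have [a Ha] : exists a : nat -> G, forall j, a j \in r /\ Gam (c *+ j - a j).
  apply: (@choice nat G (fun j a => a \in r /\ Gam (c *+ j - a))) => j.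
  by have [a ar Ga] := coset_rep (c *+ j); exists a.
pose s := map a (iota 0 (size r).+1).
have /(uniqPn 0) [i [j [lt_ij lt_js]]] : ~~ uniq s.
  apply/negP => /uniq_leq_size le_sr.
  suff : (size s <= size r)%N by rewrite size_map size_iota ltnn.
  by apply: le_sr => _ /mapP [j _ ->]; case: (Ha j).
rewrite size_map size_iota in lt_js.
rewrite !(nth_map 0%N) ?size_iota ?(ltn_trans lt_ij) //.
rewrite !nth_iota ?(ltn_trans lt_ij) // !add0n => aij.
exists (j - i)%N; first by rewrite subn_gt0.
have := subgB subGam (proj2 (Ha j)) (proj2 (Ha i)).
by rewrite mulrnBr ?(ltnW lt_ij) // aij opprB addrA subrK.
Qed.

(* Modulo a finite-index subgroup, a nonempty additively closed set saturates
   to a subgroup: -a is congruent to the positive multiple a *+ (2k - 1). *)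
Lemma saturation_subgroup (L : G -> Prop) :
  (exists a, L a) -> (forall a b, L a -> L b -> L (a + b)) -> is_subgroup (saturation L).
Proof.
move=> [a0 La0] addL.
have mulL a k : L a -> L (a *+ k.+1).
  by move=> La; elim: k => [|k IHk]; rewrite ?mulr1n // mulrS; apply: addL.
have oppL a : L a -> saturation L (- a).
  move=> La; have [k k0 Gk] := finite_index_torsion a.
  exists (a *+ (k.-1 + k)); split; first by rewrite -{2}(prednK k0) addnS; apply: mulL.
  have -> : - a - a *+ (k.-1 + k) = - (a *+ k + a *+ k).
    by rewrite -opprD -mulrS -addSn prednK // mulrnDr.
  by apply/(subgN subGam)/(subgD subGam).
split.
  have [k k0 Gk] := finite_index_torsion a0.
  exists (a0 *+ k); split; first by rewrite -(prednK k0); apply: mulL.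
  by rewrite sub0r; apply: (subgN subGam).
move=> x y [a [La Gxa]] [b [Lb Gyb]].
have [b' [Lb' Gb']] := oppL b Lb.
exists (a + b'); split; first exact: addL.
have Gyb' : Gam (- y - b').
  by have := subgB subGam Gb' Gyb; rewrite opprB addrACA addNr add0r addrC.
by have := subgD subGam Gxa Gyb'; rewrite opprD addrACA.
Qed.

End Saturation.

Lemma sg_quot_gen_quot (G : zmodType) (Gam X : G -> Prop) g :
  is_subgroup Gam -> finite_index Gam -> (exists x, X x) ->
  sg_quot Gam X g <-> gen_quot Gam X g.
Proof.
move=> subGam finGam [x0 Xx0]; split; first exact: saturation_mono (@in_sg_gen _ X).
move=> Hg; apply: (saturation_idem subGam); apply: saturation_mono Hg.
apply: in_gen_min => [|x Xx]; last exact/(saturation_incl subGam)/sgX.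
apply: saturation_subgroup => //; first by exists x0; apply: sgX.
exact: sgD.
Qed.

Section Paths.
Variables (S : countType) (C : S -> S -> bool) (G : zmodType) (h : S -> S -> G).

Definition admissible (y : int -> S) := forall i : int, C (y i) (y (i + 1)).

Definition weight (y : int -> S) (i : int) (n : nat) : G :=
  \sum_(k < n) h (y (i + k%:Z)) (y (i + k%:Z + 1)).

Lemma point_eq (x y : Sigma C) : sval x = sval y -> x = y.
Proof.
by case: x => x Hx; case: y => y Hy /= E; subst y; congr exist; apply: proof_irrelevance.
Qed.

Lemma iter_shift (x : Sigma C) n i :
  sval (iter n (@shift S C) x) i = sval x (i + n%:Z).
Proof.
elim: n i => [|n IHn] i; first by rewrite addr0.
by rewrite iterS /= IHn -addn1 PoszD addrA addrAC.
Qed.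

Lemma birkhoff_weight (x : Sigma C) n : birkhoff h x n = weight (sval x) 0 n.
Proof. by apply: eq_bigr => k _; rewrite /cocycle !iter_shift add0r addrC. Qed.

Lemma iter_skew (x : Sigma C) (g : G) n :
  iter n (Defs.skew h) (pair x g) = pair (iter n (@shift S C) x) (g + birkhoff h x n).
Proof.
elim: n => [|n IHn]; first by rewrite /birkhoff big_ord0 addr0.
by rewrite iterS IHn /Defs.skew /= /birkhoff big_ord_recr /= addrA.
Qed.

Lemma weight0 y i : weight y i 0 = 0.
Proof. by rewrite /weight big_ord0. Qed.

Lemma weight_split y i m n : weight y i (m + n) = weight y i m + weight y (i + m%:Z) n.
Proof.
rewrite /weight big_split_ord /=; congr (_ + _).
by apply: eq_bigr => k _; rewrite PoszD addrA.
Qed.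

Lemma weight_ext y z i j n :
  (forall k : nat, (k <= n)%N -> y (i + k%:Z) = z (j + k%:Z)) ->
  weight y i n = weight z j n.
Proof.
move=> yz; apply: eq_bigr => k _.
have := yz k.+1 (ltn_ord k); rewrite intS (addrC 1) !addrA => <-.
by rewrite yz // ltnW.
Qed.

Lemma admissible_shift y j : admissible y -> admissible (fun k => y (k + j)).
Proof. by move=> Hy k; rewrite addrAC; apply: Hy. Qed.

Definition glue (y z : int -> S) (i j : int) : int -> S :=
  fun k => if k <= i then y k else z (k - i + j).

Lemma glue_l y z i j k : k <= i -> glue y z i j k = y k.
Proof. by rewrite /glue => ->. Qed.

Lemma glue_r y z i j k : y i = z j -> i <= k -> glue y z i j k = z (k - i + j).
Proof.
rewrite /glue le_eqVlt => yz /orP [/eqP <-|lt_ik]; first by rewrite lexx subrr add0r.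
by rewrite leNgt lt_ik.
Qed.

Lemma admissible_glue y z i j :
  admissible y -> admissible z -> y i = z j -> admissible (glue y z i j).
Proof.
move=> Hy Hz yz k; case: (lerP (k + 1) i) => [le_k1i|lt_ik1].
  by rewrite !glue_l // (le_trans _ le_k1i) // lerDl.
rewrite (glue_r yz (ltW lt_ik1)); case: (lerP k i) => [le_ki|lt_ik].
  have -> : k = i by apply/eqP; rewrite eq_le le_ki -ltzD1.
  by rewrite glue_l // yz (addrAC i) subrr add0r addrC; apply: Hz.
by rewrite (glue_r yz (ltW lt_ik)) [k + 1 - i]addrAC [k - i + 1 + j]addrAC; apply: Hz.
Qed.

End Paths.

Section Walks.
Variables (S : countType) (C : S -> S -> bool) (G : zmodType) (h : S -> S -> G).

Definition walk (a b : S) (w : G) := exists (y : int -> S) (n : nat),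
  [/\ admissible C y, y 0 = a, y n%:Z = b & weight h y 0 n = w].

Definition occurs (a : S) := exists2 y, admissible C y & y 0 = a.

Lemma occurs_at y i : admissible C y -> occurs (y i).
Proof. by move=> Hy; exists (fun k => y (k + i)); rewrite ?add0r //; apply: admissible_shift. Qed.

Lemma walk_refl a : occurs a -> walk a a 0.
Proof. by move=> [y Hy y0]; exists y, 0%N; split; rewrite ?weight0. Qed.

Lemma walk_cat a b c w1 w2 : walk a b w1 -> walk b c w2 -> walk a c (w1 + w2).
Proof.
move=> [y [n1 [Hy y0 yn1 <-]]] [z [n2 [Hz z0 zn2 <-]]].
have yz : y n1%:Z = z 0 by rewrite yn1 z0.
exists (glue y z n1%:Z 0), (n1 + n2)%N; split; first exact: admissible_glue.
- by rewrite glue_l.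
- by rewrite (glue_r yz) PoszD ?lerDl // addr0 (addrC n1%:Z) addrK.
rewrite weight_split; congr (_ + _); apply: weight_ext => k le_kn.
  by rewrite glue_l // add0r lez_nat.
by rewrite add0r (glue_r yz) ?lerDl // addr0 (addrC n1%:Z) addrK.
Qed.

(* topological transitivity, applied to two cylinders [s_0 = a], [s_0 = b] *)
Lemma walk_of_transitive a b :
  transitive_shift C -> occurs a -> occurs b -> exists w, walk a b w.
Proof.
move=> Htr [ya Hya ya0] [yb Hyb yb0].
have cyl_open c : open_Sigma (fun x : Sigma C => sval x 0 = c).
  by move=> x x0; exists 0%N => y /(_ 0 isT) ->.
have [n [x [x0 xn]]] := Htr _ _ (cyl_open a) (cyl_open b)
  (ex_intro _ (exist _ ya Hya) ya0) (ex_intro _ (exist _ yb Hyb) yb0).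
exists (weight h (sval x) 0 n), (sval x), n; split => //; first exact: svalP.
by rewrite -xn iter_shift add0r.
Qed.

(* a closed walk of positive length is the period of a periodic point, so its
   weight is a displacement *)
Lemma closed_walk_disp y (n : nat) :
  admissible C y -> y 0 = y n%:Z -> (0 < n)%N -> disp C h (weight h y 0 n).
Proof.
move=> Hy yn n_gt0.
have n_neq0 : n%:Z != 0 by rewrite eqz_nat -lt0n.
have n_gt0' : 0 < n%:Z by rewrite ltz_nat.
pose p k := y (k %% n%:Z)%Z.
have Hp : admissible C p.
  move=> k; rewrite /p -modzDml.
  have r_ge0 := modz_ge0 k n_neq0; have r_lt := ltz_pmod k n_gt0'.
  set r := (k %% n%:Z)%Z in r_ge0 r_lt *.
  case: (ltrP (r + 1) n%:Z) => [r1_lt|n_le].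
    by rewrite (modz_small (m := r + 1)) ?r1_lt ?andbT ?(le_trans r_ge0) ?lerDl //.
  have r1 : r + 1 = n%:Z by apply/eqP; rewrite eq_le n_le andbT lezD1.
  by rewrite r1 modzz yn -r1; apply: Hy.
exists (exist _ p Hp), n; split => //; split.
  apply: point_eq; apply: functional_extensionality => k.
  by rewrite iter_shift /= /p modzDr.
rewrite birkhoff_weight /=; apply: weight_ext => k le_kn; rewrite /p !add0r.
have [lt_kn|le_nk] := ltnP k n; first by rewrite modz_small // ltz_nat lt_kn andbT.
have -> : k = n by apply/eqP; rewrite eqn_leq le_kn le_nk.
by rewrite modzz yn.
Qed.

Lemma disp_loop g : disp C h g -> exists2 a, occurs a & walk a a g.
Proof.
move=> [p [n [_ [pn ->]]]]; exists (sval p 0); first exact/occurs_at/svalP.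
exists (sval p), n; split; rewrite ?birkhoff_weight //; first exact: svalP.
by rewrite -{2}pn iter_shift add0r.
Qed.

Lemma exists_disp :
  inhabited (Sigma C) -> transitive_shift C -> exists g, disp C h g.
Proof.
move=> [x] Htr; have Hx := svalP x.
have [_ [y [n [Hy y0 yn _]]]] := walk_of_transitive Htr (occurs_at 1 Hx) (occurs_at 0 Hx).
have xy : sval x 1 = y 0 by rewrite y0.
exists (weight h (glue (sval x) y 1 0) 0 n.+1).
apply: closed_walk_disp => //; first exact: admissible_glue.
rewrite glue_l // (glue_r xy); last by rewrite intS lerDl.
by rewrite intS addr0 (addrC 1) addrK yn.
Qed.

End Walks.

(* Modulo a finite-index subgroup Gam, the weights of loops at an occurring
   state a form a subgroup, which contains D(tau): a periodic orbit through v
   is reached from a and left back to a, and the detour without the orbit is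
   subtracted. *)
Section Loops.
Variables (S : countType) (C : S -> S -> bool) (G : zmodType) (h : S -> S -> G).
Variable Gam : G -> Prop.
Hypotheses (subGam : is_subgroup Gam) (finGam : finite_index Gam).
Hypothesis Htr : transitive_shift C.
Variable a : S.
Hypothesis occ_a : occurs C a.

Definition loop_class := saturation Gam (walk C h a a).

Lemma loop_class_subgroup : is_subgroup loop_class.
Proof.
apply: saturation_subgroup => //; first by exists 0; apply: walk_refl.
by move=> w1 w2; apply: walk_cat.
Qed.

Lemma disp_loop_class g : disp C h g -> loop_class g.
Proof.
move=> /disp_loop [v occ_v loop_v].
have [w1 a_v] := walk_of_transitive h Htr occ_a occ_v.
have [w2 v_a] := walk_of_transitive h Htr occ_v occ_a.
have detour_orbit : loop_class (w1 + g + w2).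
  exact/(saturation_incl subGam)/(walk_cat (walk_cat a_v loop_v) v_a).
have detour : loop_class (w1 + w2).
  exact/(saturation_incl subGam)/(walk_cat a_v v_a).
have := subgB loop_class_subgroup detour_orbit detour.
by rewrite (addrAC w1 g) (addrAC (w1 + w2)) subrr add0r.
Qed.

Lemma gen_disp_loop_class g : in_gen (disp C h) g -> loop_class g.
Proof. exact: (in_gen_min loop_class_subgroup disp_loop_class). Qed.

End Loops.

Lemma absz_le_bounds (i : int) (N : nat) : (`|i| <= N)%N -> - N%:Z <= i <= N%:Z.
Proof. by rewrite -lez_nat abszE ler_norml. Qed.

Section Splice.
Variables (S : countType) (C : S -> S -> bool) (G : zmodType) (h : S -> S -> G).

(* Splicing orbit segments: the past of x up to time N, a walk from x_N to
   x'_(-M), and the future of x' from time -M form a point z which agrees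
   with x on [-N, N] and whose image under sigma^(N+L+M) agrees with x' on
   [-M, M], with the corresponding Birkhoff sum. *)
Lemma splice (x x' : Sigma C) (N M : nat) w :
  walk C h (sval x N%:Z) (sval x' (- M%:Z)) w ->
  exists (z : Sigma C) (n : nat),
    [/\ agree N x z, agree M x' (iter n (@shift S C) z) &
        birkhoff h z n = weight h (sval x) 0 N + w + weight h (sval x') (- M%:Z) M].
Proof.
move=> [y [L [Hy y0 yL <-]]].
pose q := glue y (sval x') L%:Z (- M%:Z).
have Hq : admissible C q by apply: admissible_glue => //; apply: svalP.
have xq : sval x N%:Z = q 0 by rewrite /q glue_l // y0.
pose f := glue (sval x) q N%:Z 0.
have Hf : admissible C f by apply: admissible_glue => //; apply: svalP.
have f_mid k : 0 <= k -> f (N%:Z + k) = q k.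
  by move=> k_ge0; rewrite /f (glue_r xq) ?lerDl // addr0 (addrC N%:Z) addrK.
have q_end k : 0 <= k -> q (L%:Z + k) = sval x' (k - M%:Z).
  by move=> k_ge0; rewrite /q (glue_r yL) ?lerDl // (addrC L%:Z) addrK.
exists (exist _ f Hf), (N + L + M)%N; split.
- by move=> i /absz_le_bounds /andP [_ le_iN]; rewrite /= /f glue_l.
- move=> i /absz_le_bounds /andP [le_Mi _]; rewrite iter_shift /=.
  have iM_ge0 : 0 <= i + M%:Z by rewrite -(addNr M%:Z) lerD2r.
  have -> : i + (N + L + M)%N%:Z = N%:Z + (L%:Z + (i + M%:Z)).
    by rewrite !PoszD addrC -!addrA (addrC M%:Z).
  rewrite f_mid; last by rewrite addr_ge0.
  by rewrite (q_end _ iM_ge0) addrK.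
rewrite birkhoff_weight /= !weight_split; congr (_ + _ + _); apply: weight_ext.
- by move=> k le_kN; rewrite !add0r /f glue_l // lez_nat.
- by move=> k le_kL; rewrite !add0r f_mid // /q glue_l // lez_nat.
move=> k _; rewrite !add0r PoszD -addrA f_mid ?addr_ge0 //.
by rewrite (q_end k%:Z isT) addrC.
Qed.

End Splice.

Section Transitivity.
Variables (S : countType) (C : S -> S -> bool) (G : zmodType) (h : S -> S -> G).

(* (b) => (a): to go from a cylinder U x {g} to a cylinder V x {g'} modulo Gam,
   splice the segment of x leaving U, a loop at x_N whose weight corrects the
   group coordinate modulo Gam, a walk from x_N to x'_(-M), and the segment
   of x' entering V. *)
Lemma ftp_of_gen :
  transitive_shift C -> (forall g, in_gen (disp C h) g) -> ftp C h.
Proof.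
move=> Htr genD Gam subGam finGam U V [_ U_open] [V_sat V_open] [x [g Uxg]] [x' [g' Vx'g']].
have [N UN] := U_open _ _ Uxg.
have [M VM] := V_open _ _ Vx'g'.
have occ_xN := occurs_at N%:Z (svalP x).
have [w0 xN_x'M] := walk_of_transitive h Htr occ_xN (occurs_at (- M%:Z) (svalP x')).
pose A := weight h (sval x) 0 N.
pose B := weight h (sval x') (- M%:Z) M.
have [w1 [loop_w1 Gw1]] :=
  gen_disp_loop_class subGam finGam Htr occ_xN (genD (g' - (g + A + w0 + B))).
have [z [n [xz x'z bz]]] := splice (walk_cat loop_w1 xN_x'M).
exists n, z, g; split; first exact: UN.
rewrite iter_skew /=.
have Gc : Gam (g + birkhoff h z n - g').
  by have := subgN subGam Gw1; rewrite bz !opprB (addrCA A) !addrA (addrC g w1).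
by have := V_sat _ _ _ Gc (VM _ x'z); rewrite addrC subrK.
Qed.

(* Transitivity from [s_0 = a] x Gam to [s_0 = a] x (g0 + Gam)
   yields a closed walk at a whose weight lies in g0 + Gam. *)
Lemma gen_of_transitive_quot (Gam : G -> Prop) :
  is_subgroup Gam -> inhabited (Sigma C) -> transitive_quot C h Gam ->
  forall g0, saturation Gam (in_gen (disp C h)) g0.
Proof.
move=> subGam [x0] Htq g0; pose a := sval x0 0.
pose U (y : Sigma C) (g : G) := sval y 0 = a /\ Gam g.
pose V (y : Sigma C) (g : G) := sval y 0 = a /\ Gam (g - g0).
have cyl y y' : agree 0 y y' -> sval y' 0 = sval y 0 by apply.
have U_open : open_quot Gam U.
  split; first by move=> y g c Gc [ya Gg]; split => //; apply: (subgD subGam).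
  by move=> y g [ya Gg]; exists 0%N => y' /cyl; rewrite ya.
have V_open : open_quot Gam V.
  split; first by move=> y g c Gc [ya Gg]; split => //; rewrite addrAC; apply: (subgD subGam).
  by move=> y g [ya Gg]; exists 0%N => y' /cyl; rewrite ya.
have U0 : exists y g, U y g by exists x0, 0; split => //; apply: subg0.
have V0 : exists y g, V y g by exists x0, g0; split; rewrite ?subrr //; apply: subg0.
have [n [x [g [[xa Gg] Vxg]]]] := Htq U V U_open V_open U0 V0.
move: Vxg; rewrite iter_skew /= /V iter_shift add0r => -[xn Gn].
exists (birkhoff h x n); split.
  case: n xn Gn => [|n] xn Gn; first by rewrite /birkhoff big_ord0; apply: gen0.
  by apply: genX; rewrite birkhoff_weight; apply: closed_walk_disp; rewrite ?xn ?xa //; apply: svalP.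
by have := subgB subGam Gg Gn; rewrite opprB opprD addrCA addNKr.
Qed.

End Transitivity.

(* D(tau_Gam) is the image of D(tau) in G/Gam, so <D(tau_Gam)> is the image
   of <D(tau)>. *)
Section QuotientDisplacements.
Variables (S : countType) (C : S -> S -> bool) (G : zmodType) (h : S -> S -> G).
Variable Gam : G -> Prop.
Hypothesis subGam : is_subgroup Gam.

Lemma disp_disp_quot g : disp C h g -> disp_quot C h Gam g.
Proof.
by move=> [p [n [n_gt0 [pn ->]]]]; exists p, n; rewrite subrr; split; [|split; [|apply: subg0]].
Qed.

Lemma gen_disp_quot_saturation g : finite_index Gam ->
  in_gen (disp_quot C h Gam) g -> saturation Gam (in_gen (disp C h)) g.
Proof.
move=> finGam; apply: in_gen_min.
  apply: saturation_subgroup => //; first by exists 0; apply: gen0.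
  exact: subgD (in_gen_subgroup _).
move=> x [p [n [n_gt0 [pn Gx]]]]; exists (birkhoff h p n); split => //.
by apply: genX; exists p, n.
Qed.

End QuotientDisplacements.

Section Lattice.
Variable d : nat.
Implicit Types (H : 'rV[int]_d -> Prop) (u v e : 'rV[int]_d).

Definition mult_lattice (m : nat) v := forall j, (m%:Z %| v ord0 j)%Z.

Lemma mult_lattice_subgroup m : is_subgroup (mult_lattice m).
Proof.
split; first by move=> j; rewrite mxE dvdz0.
by move=> u v Hu Hv j; rewrite !mxE rpredB.
Qed.

(* the residues in [0, m) form a finite set of coset representatives *)
Lemma mult_lattice_finite_index m : (0 < m)%N -> finite_index (mult_lattice m).
Proof.
case: m => // k _.
pose embed (A : 'M['I_k.+1]_(1, d)) := map_mx (fun i : 'I_k.+1 => (i : nat)%:Z) A.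
exists [seq embed A | A <- enum {: 'M['I_k.+1]_(1, d)}] => g.
pose A := \matrix_(i, j) (inord `|(g i j %% k.+1%:Z)%Z|%N : 'I_k.+1).
exists (embed A); first by apply: map_f; rewrite mem_enum.
have r_ge0 j : 0 <= (g ord0 j %% k.+1%:Z)%Z by apply: modz_ge0.
move=> j; rewrite !mxE inordK; last by rewrite -ltz_nat gez0_abs ?ltz_pmod.
by rewrite gez0_abs // {1}(divz_eq (g ord0 j) k.+1) addrK dvdz_mull.
Qed.

Lemma row_mulz v j (z : int) : (v *~ z) ord0 j = v ord0 j * z.
Proof.
case: z => n; first by rewrite /= mulmxnE -mulrzz.
by rewrite NegzE !mulrNz mxE mulmxnE -mulrzz mulrNz.
Qed.

(* a subgroup of Z meeting 1 + mZ for every m > 0 contains 1: take t0 odd,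
   then t = 1 - q t0 in the subgroup *)
Lemma int_subgroup_one (T : int -> Prop) : is_subgroup T ->
  (forall m, (0 < m)%N -> exists t, T t /\ (m%:Z %| 1 - t)%Z) -> T 1.
Proof.
move=> subT meets.
have [t0 [T0 t0_odd]] := meets 2%N isT.
have t0_neq0 : t0 != 0 by apply: contraTneq t0_odd => ->.
have t0_pos : (0 < `|t0|)%N by rewrite absz_gt0.
have [t [Tt t0_dvd]] := meets `|t0|%N t0_pos.
have /dvdzP [q Eq] : (t0 %| 1 - t)%Z by move: t0_dvd; rewrite !dvdzE.
have -> : 1 = t + t0 *~ q by rewrite mulrzz mulrC -Eq addrC subrK.
by apply: (subgD subT) => //; apply: (subgMz subT).
Qed.

Definition supported (k : nat) v := forall j : 'I_d, (k <= j)%N -> v ord0 j = 0.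

Definition approximable H (k : nat) := forall m, (0 < m)%N -> forall v,
  supported k v -> exists e, [/\ H e, supported k e & mult_lattice m (v - e)].

Section Step.
Variables (H : 'rV[int]_d -> Prop) (k : nat).
Hypotheses (subH : is_subgroup H) (lt_kd : (k < d)%N).
Let ik := Ordinal lt_kd.

(* the k-th coordinates of the elements of H supported on [0, k] form a
   subgroup of Z meeting every 1 + mZ, so one of them is 1 *)
Lemma approximable_pivot : approximable H k.+1 ->
  exists2 p, H p /\ supported k.+1 p & p ord0 ik = 1.
Proof.
move=> approx.
pose T z := exists2 e, H e /\ supported k.+1 e & e ord0 ik = z.
suff [p] : T 1 by exists p.
apply: int_subgroup_one.
  split; first by exists 0; rewrite ?mxE //; split; [apply: subg0 | move=> j _; rewrite mxE].
  move=> _ _ [e1 [H1 S1] <-] [e2 [H2 S2] <-]; exists (e1 - e2); rewrite ?mxE //.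
  by split; [apply: subgB | move=> j lt_kj; rewrite !mxE S1 ?S2 ?subr0].
move=> m m_gt0.
have delta_supp : supported k.+1 (delta_mx ord0 ik).
  by move=> j le_kj; rewrite mxE eqxx /=; case: eqP => // jk; rewrite jk ltnn in le_kj.
have [e [He Se De]] := approx m m_gt0 _ delta_supp.
by exists (e ord0 ik); split; [exists e | have := De ik; rewrite !mxE !eqxx].
Qed.

Lemma supported_clear p v : supported k.+1 p -> p ord0 ik = 1 -> supported k.+1 v ->
  supported k (v - p *~ v ord0 ik).
Proof.
move=> Sp p1 Sv j; rewrite leq_eqVlt => /orP [/eqP kj|lt_kj].
  have -> : j = ik by apply: val_inj.
  by rewrite !mxE row_mulz p1 mul1r subrr.
by rewrite !mxE row_mulz (Sv j) // (Sp j) // mul0r subrr.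
Qed.

Lemma approximable_down : approximable H k.+1 -> approximable H k.
Proof.
move=> approx; have [p [Hp Sp] p1] := approximable_pivot approx.
move=> m m_gt0 v Sv.
have [|e [He Se De]] := approx m m_gt0 v; first by move=> j /ltnW; apply: Sv.
exists (e - p *~ e ord0 ik); split; first by apply: subgB => //; apply: subgMz.
  exact: supported_clear.
have m_dvd_ek : (m%:Z %| e ord0 ik)%Z.
  by have := De ik; rewrite !mxE Sv //= sub0r rpredN.
move=> j; have := De j; rewrite !mxE row_mulz => Dj.
by rewrite opprB addrCA addrC rpredD // dvdz_mull.
Qed.

End Step.

Lemma approximable_full H : is_subgroup H ->
  forall k, (k <= d)%N -> approximable H k -> forall v, supported k v -> H v.
Proof.
move=> subH; elim=> [|k IHk] le_kd approx v Sv.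
  have -> : v = 0 by apply/matrixP => i j; rewrite ord1 mxE; apply: Sv.
  exact: subg0.
have [p [Hp Sp] p1] := approximable_pivot subH le_kd approx.
have := subgD subH (IHk (ltnW le_kd) (approximable_down subH le_kd approx) _
  (supported_clear Sp p1 Sv)) (subgMz subH (v ord0 (Ordinal le_kd)) Hp).
by rewrite subrK.
Qed.

Lemma subgroup_dense_full H : is_subgroup H ->
  (forall m, (0 < m)%N -> forall v, saturation (mult_lattice m) H v) -> forall v, H v.
Proof.
move=> subH dense v; apply: (approximable_full subH (leqnn d)); last first.
  by move=> j; rewrite leqNgt ltn_ord.
move=> m m_gt0 w _; have [e [He De]] := dense m m_gt0 w.
by exists e; split => // j; rewrite leqNgt ltn_ord.
Qed.

End Lattice.

Unset Implicit Arguments. Set Strict Implicit.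

Theorem mainTheorem5 (S : countType) (C : S -> S -> bool) (d : nat)
    (h : S -> S -> 'rV[int]_d)
    (Hrow : finite_rows C) (Hcol : finite_cols C)
    (Hne : inhabited (Sigma C)) (Htr : transitive_shift C) :
  (ftp C h <-> (forall g, in_gen (disp C h) g)) /\
  ((forall g, in_gen (disp C h) g) <->
    (forall Gam : 'rV[int]_d -> Prop, is_subgroup Gam -> finite_index Gam ->
       (forall g, sg_quot Gam (disp_quot C h Gam) g <-> gen_quot Gam (disp_quot C h Gam) g) /\
       (forall g, gen_quot Gam (disp_quot C h Gam) g))).
Proof.
have [g0 Dg0] := exists_disp h Hne Htr.
have gen_full := subgroup_dense_full (in_gen_subgroup (disp C h)).
have lat_sub m := mult_lattice_subgroup d m.
have lat_fin m (m_gt0 : (0 < m)%N) := mult_lattice_finite_index d m_gt0.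
split; split.
-
  move=> ftp_h; apply: gen_full => m m_gt0.
  exact: gen_of_transitive_quot (lat_sub m) Hne (ftp_h _ (lat_sub m) (lat_fin m m_gt0)).
-
  exact: ftp_of_gen.
-
  move=> genD Gam subGam finGam.
  have gen_quot_full g : gen_quot Gam (disp_quot C h Gam) g.
    apply: (saturation_incl subGam).
    exact: in_gen_min (in_gen_subgroup _) (fun x Dx => genX (disp_disp_quot subGam Dx)) _ (genD g).
  split=> // g; apply: sg_quot_gen_quot => //.
  by exists g0; apply: disp_disp_quot.
-
  move=> quot_full; apply: gen_full => m m_gt0 v.
  have [_ gen_quot_v] := quot_full _ (lat_sub m) (lat_fin m m_gt0).
  apply: (saturation_idem (lat_sub m)); apply: saturation_mono (gen_quot_v v).
  by move=> a; apply: gen_disp_quot_saturation (lat_sub m) a (lat_fin m m_gt0).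
Qed.
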